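(* Let $\mu:\mathbb{N}\to\mathbb{R}$ with increments $\gamma(n)=\mu(n+1)-\mu(n)$ satisfying $\gamma(n)\ge0$ and $\gamma(n+1)\le\gamma(n)$ for all $n\in\mathbb{N}$. Let $T,N,h$ be integers with $N\ge2$, $N\le T-1$ and $1\le h\le\lfloor N/2\rfloor$, and define $$\widetilde\mu^T=\frac1h\sum_{l=N-h+1}^{N}\Big(\mu(l)+(T-l)\frac{\mu(l)-\mu(l-h)}{h}\Big).$$ Then $\widetilde\mu^T\ge\mu(T)$ and $$\widetilde\mu^T-\mu(T)\le\frac12(2T-2N+h-1)\,\gamma(N-2h+1).$$
   Context: In the paper $\mu$ is the expected-reward function of an arm (indexed by number of pulls), $N$ is the number of pulls of the arm before some round $t\le T$, and $h$ is the window width. *)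

From Stdlib Require Import Reals Lra Lia.
Open Scope R_scope.

Definition gam (mu : nat -> R) (n : nat) : R := mu (S n) - mu n.

(* sum_{l = a}^{b} f l  (empty, i.e. 0, when b < a) *)
Fixpoint sum_range_aux (f : nat -> R) (a : nat) (k : nat) : R :=
  match k with
  | O => 0
  | S k' => sum_range_aux f a k' + f (a + k')%nat
  end.
Definition sum_range (f : nat -> R) (a b : nat) : R :=
  sum_range_aux f a (S b - a).

Definition mu_tilde (mu : nat -> R) (T N h : nat) : R :=
  / INR h * sum_range
    (fun l => mu l + (INR T - INR l) * ((mu l - mu (l - h)%nat) / INR h))
    (N - h + 1) N.

(** For [N - h + 1 <= l <= N], the chord slope [(mu l - mu (l - h)) / h] lies
    between [gam mu l] and [gam mu (l - h)] by concavity.  Extrapolating the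
    chord from [l] to [T] therefore overshoots [mu T] (which grows by at most
    [gam mu l] per step after [l]), by at most [(T - l) gam mu (l - h)
    <= (T - l) gam mu (N - 2h + 1)].  Averaging over the [h] values of [l]
    turns [T - l] into [(2T - 2N + h - 1) / 2]. *)

From Stdlib Require Import Reals Lra Lia.
Open Scope R_scope.

Lemma sum_range_aux_le (f g : nat -> R) (a k : nat) :
  (forall i, (i < k)%nat -> f (a + i)%nat <= g (a + i)%nat) ->
  sum_range_aux f a k <= sum_range_aux g a k.
Proof.
  induction k as [|k IH]; intros Hfg; simpl; [lra|].
  assert (sum_range_aux f a k <= sum_range_aux g a k) by (apply IH; auto).
  specialize (Hfg k (Nat.lt_succ_diag_r k)).
  lra.
Qed.

Lemma sum_range_aux_const (c : R) (a k : nat) :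
  sum_range_aux (fun _ => c) a k = INR k * c.
Proof.
  induction k as [|k IH]; simpl sum_range_aux.
  - simpl; ring.
  - rewrite IH, S_INR; ring.
Qed.

Lemma sum_range_aux_affine (c d : R) (a k : nat) :
  sum_range_aux (fun l => c + d * INR l) a k
  = INR k * c + d * INR k * (INR a + (INR k - 1) / 2).
Proof.
  induction k as [|k IH]; simpl sum_range_aux.
  - simpl; field.
  - rewrite IH, plus_INR, S_INR; field.
Qed.

Definition chord_extrapolation (mu : nat -> R) (h T l : nat) : R :=
  mu l + (INR T - INR l) * ((mu l - mu (l - h)%nat) / INR h).

Lemma mu_tilde_chord_extrapolation (mu : nat -> R) (T N h : nat) :
  (h <= N)%nat ->
  mu_tilde mu T N h
  = / INR h * sum_range_aux (chord_extrapolation mu h T) (N - h + 1) h.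
Proof.
  intros HhN; unfold mu_tilde, sum_range.
  now replace (S N - (N - h + 1))%nat with h by lia.
Qed.

Section ConcaveNondecreasing.

Variable mu : nat -> R.
Hypothesis gam_ge0 : forall n : nat, 0 <= gam mu n.
Hypothesis gam_S_le : forall n : nat, gam mu (S n) <= gam mu n.

Lemma gam_antitone (i j : nat) : (i <= j)%nat -> gam mu j <= gam mu i.
Proof.
  induction 1 as [|j _ IH]; [lra|].
  specialize (gam_S_le j); lra.
Qed.

Lemma mu_le_add (m k : nat) : mu m <= mu (m + k)%nat.
Proof.
  induction k as [|k IH]; [rewrite Nat.add_0_r; lra|].
  rewrite Nat.add_succ_r.
  specialize (gam_ge0 (m + k)%nat); unfold gam in *; lra.
Qed.

Lemma mu_add_sub_le (m k : nat) : mu (m + k)%nat - mu m <= INR k * gam mu m.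
Proof.
  induction k as [|k IH]; [rewrite Nat.add_0_r; simpl; lra|].
  rewrite Nat.add_succ_r, S_INR.
  assert (gam mu (m + k)%nat <= gam mu m) by (apply gam_antitone; lia).
  unfold gam in *; lra.
Qed.

Lemma mu_add_sub_ge (m k : nat) :
  INR k * gam mu (m + k)%nat <= mu (m + k)%nat - mu m.
Proof.
  induction k as [|k IH]; [rewrite Nat.add_0_r; simpl; lra|].
  rewrite Nat.add_succ_r, S_INR.
  pose proof (gam_S_le (m + k)).
  assert (INR k * gam mu (S (m + k)) <= INR k * gam mu (m + k)%nat)
    by (apply Rmult_le_compat_l; [apply pos_INR | apply gam_S_le]).
  unfold gam in *; lra.
Qed.

Lemma chord_slope_bounds (h l : nat) : (1 <= h <= l)%nat ->
  gam mu l <= (mu l - mu (l - h)%nat) / INR h <= gam mu (l - h)%nat.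
Proof.
  intros Hhl.
  assert (Hh : 0 < INR h) by (apply lt_0_INR; lia).
  pose proof (mu_add_sub_ge (l - h) h) as Hge.
  pose proof (mu_add_sub_le (l - h) h) as Hle.
  replace (l - h + h)%nat with l in Hge, Hle by lia.
  set (s := (mu l - mu (l - h)%nat) / INR h).
  assert (Hs : INR h * s = mu l - mu (l - h)%nat) by (unfold s; field; lra).
  split; apply Rmult_le_reg_l with (INR h); auto; lra.
Qed.

Lemma chord_extrapolation_bounds (h T l : nat) : (1 <= h <= l)%nat -> (l <= T)%nat ->
  mu T <= chord_extrapolation mu h T l
  /\ chord_extrapolation mu h T l - mu T <= (INR T - INR l) * gam mu (l - h)%nat.
Proof.
  intros Hhl HlT; unfold chord_extrapolation.
  destruct (chord_slope_bounds h l Hhl) as [Hslope_ge Hslope_le].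
  set (s := (mu l - mu (l - h)%nat) / INR h) in *.
  pose proof (mu_add_sub_le l (T - l)) as Hgrowth.
  pose proof (mu_le_add l (T - l)) as Hmono.
  replace (l + (T - l))%nat with T in Hgrowth, Hmono by lia.
  rewrite minus_INR in Hgrowth by lia.
  assert (HTl : 0 <= INR T - INR l) by (rewrite <- minus_INR by lia; apply pos_INR).
  split.
  - assert ((INR T - INR l) * gam mu l <= (INR T - INR l) * s)
      by (apply Rmult_le_compat_l; auto).
    lra.
  - assert ((INR T - INR l) * s <= (INR T - INR l) * gam mu (l - h)%nat)
      by (apply Rmult_le_compat_l; auto).
    lra.
Qed.

Lemma chord_extrapolation_window_bounds (N h T l : nat) :
  (1 <= h)%nat -> (2 * h <= N)%nat -> (N < T)%nat -> (N - h + 1 <= l <= N)%nat ->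
  mu T <= chord_extrapolation mu h T l
  /\ chord_extrapolation mu h T l
     <= mu T + (INR T - INR l) * gam mu (N - 2 * h + 1)%nat.
Proof.
  intros Hh H2h HNT Hl.
  destruct (chord_extrapolation_bounds h T l) as [Hlo Hhi]; try lia.
  assert (gam mu (l - h)%nat <= gam mu (N - 2 * h + 1)%nat)
    by (apply gam_antitone; lia).
  assert (HTl : 0 <= INR T - INR l) by (rewrite <- minus_INR by lia; apply pos_INR).
  assert ((INR T - INR l) * gam mu (l - h)%nat
          <= (INR T - INR l) * gam mu (N - 2 * h + 1)%nat)
    by (apply Rmult_le_compat_l; auto).
  lra.
Qed.

End ConcaveNondecreasing.

Theorem lemma5 (mu : nat -> R) (T N h : nat)
  (Hgam_nonneg : forall n : nat, 0 <= gam mu n)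
  (Hgam_noninc : forall n : nat, gam mu (S n) <= gam mu n)
  (HN2 : (2 <= N)%nat) (HNT : (N <= T - 1)%nat)
  (Hh1 : (1 <= h)%nat) (Hh2 : (h <= N / 2)%nat) :
  mu T <= mu_tilde mu T N h /\
  mu_tilde mu T N h - mu T
    <= / 2 * (2 * INR T - 2 * INR N + INR h - 1) * gam mu (N - 2 * h + 1)%nat.
Proof.
  assert (H2h : (2 * h <= N)%nat).
  { pose proof (Nat.Div0.mul_div_le N 2); lia. }
  set (g := gam mu (N - 2 * h + 1)%nat).
  assert (Hterm : forall i, (i < h)%nat ->
    mu T <= chord_extrapolation mu h T (N - h + 1 + i)
    /\ chord_extrapolation mu h T (N - h + 1 + i)
       <= (mu T + g * INR T) + - g * INR (N - h + 1 + i)).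
  { intros i Hi.
    destruct (chord_extrapolation_window_bounds mu Hgam_nonneg Hgam_noninc
                N h T (N - h + 1 + i)) as [Hlo Hhi]; try lia.
    split; fold g in Hhi; lra. }
  rewrite mu_tilde_chord_extrapolation by lia.
  set (S0 := sum_range_aux (chord_extrapolation mu h T) (N - h + 1) h).
  assert (Hlo : INR h * mu T <= S0).
  { rewrite <- sum_range_aux_const with (a := (N - h + 1)%nat).
    apply sum_range_aux_le; intros i Hi; apply Hterm; auto. }
  assert (Hhi : S0 <= INR h * (mu T + g * INR T)
                      + - g * INR h * (INR N - INR h + 1 + (INR h - 1) / 2)).
  { replace (INR N - INR h + 1) with (INR (N - h + 1))
      by (rewrite plus_INR, minus_INR by lia; simpl; ring).
    rewrite <- sum_range_aux_affine.
    apply sum_range_aux_le; intros i Hi; apply Hterm; auto. }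
  assert (Hh : 0 < INR h) by (apply lt_0_INR; lia).
  split; apply Rmult_le_reg_l with (INR h); auto.
  - rewrite <- Rmult_assoc, Rinv_r, Rmult_1_l by lra; lra.
  - replace (INR h * (/ INR h * S0 - mu T)) with (S0 - INR h * mu T) by (field; lra).
    lra.
Qed.
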